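(* Let $\Lambda\Subset\mathbb X$ and fix a selector $s$. Let $\rho_0=\mathbf 1_{\{\varnothing\}}$ and $\rho_{n+1}=K_\Lambda\rho_n$ for $n\in\mathbb N_0$. Suppose there exists a function $\xi:\mathbf F\to[0,\infty)$ with $\tilde K_\Lambda\xi\le\xi$ pointwise and $\xi(\varnothing)=1$. Then the pointwise limit $\rho(X)=\lim_{n\to\infty}\rho_n(X)$ exists for every $X\in\mathbf F$, and $\rho=K_\Lambda\rho$, $\rho(\varnothing)=1$ and $|\rho|\le\xi$ pointwise.
   Context: $\mathbb X$ is a finite or countably infinite set, $X\Subset\mathbb X$ means finite subset, $\mathbf F$ is the set of finite subsets. Fix $z:\mathbb X\to\mathbb C$, $W:\mathbf F\to\mathbb C$. Conditional interaction: $W(X\mid B)=\prod_{C\subset B}W(X\cup C)$ if $X\cap B=\varnothing$, $W(X\mid B)=0$ if $X=\{y\}$ with $y\in B$, $W(X\mid B)=1$ otherwise. Boltzmann factor $\kappa(X\mid B)=\prod_{\varnothing\neq S\subset X}W(S\mid B)$, $\kappa(s\mid B)=\kappa(\{s\}\mid B)$. Kernel: $\gamma(s,N\mid B)=\sum_{M\subset N}(-1)^{|N\setminus M|}\kappa(s\mid B\cup M)$. A selector is a map $s:\mathbf F\setminus\{\varnothing\}\to\mathbb X$ with $s_X:=s(X)\in X$; put $X'_s=X\setminus\{s_X\}$. For $\rho:\mathbf F\to\mathbb C$: $(K_\Lambda\rho)(\varnothing)=\rho(\varnothing)$ and, for $X\neq\varnothing$, $(K_\Lambda\rho)(X)=\sum_{N\subset\Lambda\setminus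 X'_s}z(s_X)\gamma(s_X,N\mid X'_s)\rho(X'_s\cup N)$. For $\tilde\rho:\mathbf F\to[0,\infty)$: $(\tilde K_\Lambda\tilde\rho)(\varnothing)=\tilde\rho(\varnothing)$ and, for $X\neq\varnothing$, $(\tilde K_\Lambda\tilde\rho)(X)=\sum_{N\subset\Lambda\setminus X'_s}|z(s_X)|\,|\gamma(s_X,N\mid X'_s)|\,\tilde\rho(X'_s\cup N)$. *)

From HB Require Import structures.
From mathcomp Require Import all_boot all_order all_algebra.
From mathcomp Require Import finmap.
From mathcomp Require Import complex.
From mathcomp Require Import reals.
Set Implicit Arguments.
Unset Strict Implicit.
Unset Printing Implicit Defensive.
Import Order.TTheory GRing.Theory Num.Theory.
Local Open Scope ring_scope.
Local Open Scope fset_scope.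

Section Kernel.
Variables (R : realType) (T : countType).
Notation C := R[i].
Variables (z : T -> C) (W : {fset T} -> C).

Definition Wc (X B : {fset T}) : C :=
  if X `&` B == fset0 then \prod_(D <- fpowerset B) W (X `|` D)
  else if has (fun y => X == [fset y]) B then 0 else 1.

Definition kappa (X B : {fset T}) : C :=
  \prod_(S <- fpowerset X | S != fset0) Wc S B.

Definition kappa1 (x : T) (B : {fset T}) : C := kappa [fset x] B.

Definition gamma (x : T) (N B : {fset T}) : C :=
  \sum_(M <- fpowerset N) (-1) ^+ #|` N `\` M| * kappa1 x (B `|` M).

Definition is_selector (s : {fset T} -> T) : Prop :=
  forall X : {fset T}, X != fset0 -> s X \in X.

Definition Xprime (s : {fset T} -> T) (X : {fset T}) : {fset T} := X `\ s X.

Definition KL (s : {fset T} -> T) (L : {fset T}) (rho : {fset T} -> C)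
    (X : {fset T}) : C :=
  if X == fset0 then rho fset0
  else \sum_(N <- fpowerset (L `\` Xprime s X))
         z (s X) * gamma (s X) N (Xprime s X) * rho (Xprime s X `|` N).

Definition KLt (s : {fset T} -> T) (L : {fset T}) (rho : {fset T} -> R)
    (X : {fset T}) : R :=
  if X == fset0 then rho fset0
  else \sum_(N <- fpowerset (L `\` Xprime s X))
         ComplexField.Normc.normc (z (s X)) * ComplexField.Normc.normc (gamma (s X) N (Xprime s X))
           * rho (Xprime s X `|` N).

Definition rho0 (X : {fset T}) : C := if X == fset0 then 1 else 0.

Fixpoint rhon (s : {fset T} -> T) (L : {fset T}) (n : nat) : {fset T} -> C :=
  match n with
  | 0 => rho0
  | n.+1 => KL s L (rhon s L n)
  end.

End Kernel.

Definition cvgC (R : realType) (u : nat -> R[i]) (l : R[i]) : Prop :=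
  forall eps : R, 0 < eps -> exists N : nat, forall n, (N <= n)%N ->
    ComplexField.Normc.normc (u n - l) < eps.

(* Besides the iterates rho_n = K^n 1_{emptyset}, run the majorant kernel from
   the same start: rhot_n = Kt^n 1_{emptyset}.  As K is linear and
   |K f| <= Kt |f| pointwise, induction gives
   |rho_(n+1) - rho_n| <= rhot_(n+1) - rhot_n, and Kt xi <= xi gives
   rhot_n <= xi.  Hence Re rho_n + rhot_n and Im rho_n + rhot_n are bounded and
   nondecreasing, so rho_n converges without appeal to completeness of C.  The
   fixed-point equation passes to the limit because (K rho)(X) is a finite
   linear combination of values of rho. *)

From Pilot Require Import Defs.
From HB Require Import structures.
From mathcomp Require Import all_boot all_order all_algebra.
From mathcomp Require Import finmap complex reals.
From mathcomp Require Import classical_sets boolp lra.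
Import Order.TTheory GRing.Theory Num.Theory ComplexField.Normc.
Set Implicit Arguments.
Unset Strict Implicit.
Unset Printing Implicit Defensive.
Local Open Scope ring_scope.

Section ComplexModulus.
Variable R : realType.
Implicit Types x y w : R[i].

Lemma normc_ge0 x : 0 <= normc x.
Proof. by case: x => a b; rewrite /normc sqrtr_ge0. Qed.

Lemma normc_sum (I : Type) (r : seq I) (F : I -> R[i]) :
  normc (\sum_(i <- r) F i) <= \sum_(i <- r) normc (F i).
Proof.
elim: r => [|i r IH]; first by rewrite !big_nil normc0.
by rewrite !big_cons (le_trans (le_normcD _ _)) // lerD2l.
Qed.

Lemma normcB_sym x y : normc (x - y) = normc (y - x).
Proof. by rewrite -normcN opprB. Qed.

Lemma normcB_le x y w : normc (x - w) <= normc (x - y) + normc (y - w).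
Proof. by have := le_normcD (x - y) (y - w); rewrite addrA subrK. Qed.

Lemma normc_Re x : `|complex.Re x| <= normc x.
Proof.
case: x => a b /=; rewrite /normc -sqrtr_sqr ler_sqrt ?addr_ge0 ?sqr_ge0 //.
by have := sqr_ge0 b; lra.
Qed.

Lemma normc_Im x : `|complex.Im x| <= normc x.
Proof.
case: x => a b /=; rewrite /normc -sqrtr_sqr ler_sqrt ?addr_ge0 ?sqr_ge0 //.
by have := sqr_ge0 a; lra.
Qed.

Lemma normc_le_ReIm x : normc x <= `|complex.Re x| + `|complex.Im x|.
Proof.
case: x => a b /=; rewrite /normc.
rewrite -[X in _ <= X]ger0_norm ?addr_ge0 // -sqrtr_sqr ler_sqrt ?sqr_ge0 //.
rewrite sqrrD !real_normK ?num_real //.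
by have := mulr_ge0 (normr_ge0 a) (normr_ge0 b); rewrite mulr2n; lra.
Qed.

Lemma ReB x y : complex.Re (x - y) = complex.Re x - complex.Re y.
Proof. by case: x; case: y. Qed.

Lemma ImB x y : complex.Im (x - y) = complex.Im x - complex.Im y.
Proof. by case: x; case: y. Qed.

End ComplexModulus.

Section Limits.
Variable R : realType.

Definition cvgR (u : nat -> R) (l : R) : Prop :=
  forall eps : R, 0 < eps ->
    exists N : nat, forall n, (N <= n)%N -> `|u n - l| < eps.

Lemma nondecreasing_bounded_cvgR (u : nat -> R) (M : R) :
  (forall n, u n <= u n.+1) -> (forall n, u n <= M) -> exists l, cvgR u l.
Proof.
move=> u_incr u_bnd.
have u_mono m n : (m <= n)%N -> u m <= u n.
  move/subnKC <-; elim: (n - m)%N => [|k IH]; first by rewrite addn0.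
  by rewrite addnS (le_trans IH).
have u_sup : has_sup (range u).
  by split; [exists (u 0%N), 0%N | exists M => _ [n _ <-]].
exists (sup (range u)) => e e_gt0.
have [_ [N _ <-] uN_gt] := sup_adherent e_gt0 u_sup.
exists N => n le_Nn; have := u_mono _ _ le_Nn.
have : u n <= sup (range u) by apply: sup_upper_bound => //; exists n.
by rewrite ltr_norml; move: uN_gt; lra.
Qed.

Lemma eq_cvgR (u v : nat -> R) (l : R) :
  (forall n, u n = v n) -> cvgR u l -> cvgR v l.
Proof. by move=> uv cvu e /cvu [N hN]; exists N => n /hN; rewrite uv. Qed.

Lemma cvgRB (u v : nat -> R) (a b : R) :
  cvgR u a -> cvgR v b -> cvgR (fun n => u n - v n) (a - b).
Proof.
move=> cvu cvv e e_gt0; have e2_gt0 : 0 < e / 2 by rewrite divr_gt0.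
have [N1 h1] := cvu _ e2_gt0; have [N2 h2] := cvv _ e2_gt0.
exists (maxn N1 N2) => n; rewrite geq_max => /andP[/h1 + /h2].
rewrite !ltr_norml; lra.
Qed.

Lemma eq_cvgC (u v : nat -> R[i]) (l : R[i]) :
  (forall n, u n = v n) -> cvgC u l -> cvgC v l.
Proof. by move=> uv cvu e /cvu [N hN]; exists N => n /hN; rewrite uv. Qed.

Lemma cvgC_ReIm (u : nat -> R[i]) (a b : R) :
  cvgR (fun n => complex.Re (u n)) a -> cvgR (fun n => complex.Im (u n)) b ->
  cvgC u (a +i* b)%C.
Proof.
move=> cvRe cvIm e e_gt0; have e2_gt0 : 0 < e / 2 by rewrite divr_gt0.
have [N1 h1] := cvRe _ e2_gt0; have [N2 h2] := cvIm _ e2_gt0.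
exists (maxn N1 N2) => n; rewrite geq_max => /andP[/h1 hRe /h2 hIm].
apply: le_lt_trans (normc_le_ReIm _) _; rewrite ReB ImB /=; lra.
Qed.

Lemma cvgC_cst (c : R[i]) : cvgC (fun=> c) c.
Proof. by move=> e e_gt0; exists 0%N => n _; rewrite subrr normc0. Qed.

Lemma cvgC_shift (u : nat -> R[i]) (l : R[i]) :
  cvgC u l -> cvgC (fun n => u n.+1) l.
Proof. by move=> cvu e /cvu [N hN]; exists N => n le_Nn; apply/hN/leqW. Qed.

Lemma cvgC_unique (u : nat -> R[i]) (l1 l2 : R[i]) :
  cvgC u l1 -> cvgC u l2 -> l1 = l2.
Proof.
move=> cv1 cv2; apply/eqP; rewrite -subr_eq0; apply/eqP/eq0_normc.
apply/eqP; rewrite eq_le normc_ge0 andbT; apply/ler_addgt0Pr => e e_gt0.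
have e2_gt0 : 0 < e / 2 by rewrite divr_gt0.
have [N1 h1] := cv1 _ e2_gt0; have [N2 h2] := cv2 _ e2_gt0.
have := h1 _ (leq_maxl N1 N2); have := h2 _ (leq_maxr N1 N2).
have := normcB_le l1 (u (maxn N1 N2)) l2; rewrite (normcB_sym l1 (u _)); lra.
Qed.

Lemma cvgCD (u v : nat -> R[i]) (a b : R[i]) :
  cvgC u a -> cvgC v b -> cvgC (fun n => u n + v n) (a + b).
Proof.
move=> cvu cvv e e_gt0; have e2_gt0 : 0 < e / 2 by rewrite divr_gt0.
have [N1 h1] := cvu _ e2_gt0; have [N2 h2] := cvv _ e2_gt0.
exists (maxn N1 N2) => n; rewrite geq_max => /andP[/h1 + /h2].
have := le_normcD (u n - a) (v n - b); rewrite addrACA opprD; lra.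
Qed.

Lemma cvgCMl (c : R[i]) (u : nat -> R[i]) (l : R[i]) :
  cvgC u l -> cvgC (fun n => c * u n) (c * l).
Proof.
move=> cvu e e_gt0; have c1_gt0 : 0 < normc c + 1 by have := normc_ge0 c; lra.
have [N hN] := cvu _ (divr_gt0 e_gt0 c1_gt0).
exists N => n /hN; rewrite ltr_pdivlMr // -mulrBr normcM.
have := normc_ge0 c; have := normc_ge0 (u n - l); nra.
Qed.

Lemma cvgC_sum (I : Type) (r : seq I) (u : nat -> I -> R[i]) (l : I -> R[i]) :
  (forall i, cvgC (u^~ i) (l i)) ->
  cvgC (fun n => \sum_(i <- r) u n i) (\sum_(i <- r) l i).
Proof.
move=> cvu; elim: r => [|i r IH].
  by rewrite big_nil; apply: eq_cvgC (cvgC_cst 0) => n; rewrite big_nil.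
by rewrite big_cons; apply: eq_cvgC (cvgCD (cvu i) IH) => n; rewrite big_cons.
Qed.

Lemma cvgC_normc_le (u : nat -> R[i]) (l : R[i]) (M : R) :
  cvgC u l -> (forall n, normc (u n) <= M) -> normc l <= M.
Proof.
move=> cvu u_bnd; apply/ler_addgt0Pr => e /cvu [N /(_ N (leqnn N))].
have := normcB_le l (u N) 0; rewrite !subr0 normcB_sym.
have := u_bnd N; lra.
Qed.

End Limits.

Section DominatedIncrements.
Variables (R : realType) (u : nat -> R[i]) (a : nat -> R) (M : R).
Hypothesis u_incr : forall n, normc (u n.+1 - u n) <= a n.+1 - a n.
Hypothesis a_bnd : forall n, a n <= M.

Let a_incr n : a n <= a n.+1.
Proof. by have := normc_ge0 (u n.+1 - u n); have := u_incr n; lra. Qed.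

Let normc_u_le n : normc (u n) <= normc (u 0%N) + (a n - a 0%N).
Proof.
elim: n => [|n IH]; first by rewrite subrr addr0.
have := normcB_le (u n.+1) (u n) 0; rewrite !subr0.
by have := u_incr n; lra.
Qed.

Let cvgR_part_addr (f : R[i] -> R) :
  (forall x y, f (x - y) = f x - f y) -> (forall x, `|f x| <= normc x) ->
  exists l, cvgR (fun n => f (u n) + a n) l.
Proof.
move=> fB f_le.
apply: (@nondecreasing_bounded_cvgR _ _ (normc (u 0%N) - a 0%N + M + M)).
  move=> n; have := le_trans (f_le _) (u_incr n).
  by rewrite fB ler_norml => /andP[]; lra.
move=> n; have := le_trans (f_le _) (normc_u_le n); rewrite ler_norml.
by have := a_bnd n; lra.
Qed.

Lemma cvgC_dominated_increments : exists l, cvgC u l.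
Proof.
have [la cva] := nondecreasing_bounded_cvgR a_incr a_bnd.
have [lr cvr] := cvgR_part_addr (@ReB R) (@normc_Re R).
have [li cvi] := cvgR_part_addr (@ImB R) (@normc_Im R).
exists ((lr - la) +i* (li - la))%C.
by apply: cvgC_ReIm;
  [apply: eq_cvgR (cvgRB cvr cva) | apply: eq_cvgR (cvgRB cvi cva)] => n;
  rewrite addrK.
Qed.

End DominatedIncrements.

Local Open Scope fset_scope.

Section KernelIteration.
Variables (R : realType) (T : countType) (z : T -> R[i]) (W : {fset T} -> R[i]).
Variables (s : {fset T} -> T) (L : {fset T}).

Local Notation KL := (KL z W s L).
Local Notation KLt := (KLt z W s L).
Local Notation rhon := (rhon z W s L).

Lemma KL_fset0 (f : {fset T} -> R[i]) : KL f fset0 = f fset0.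
Proof. by rewrite /Defs.KL eqxx. Qed.

Lemma KLt_fset0 (f : {fset T} -> R) : KLt f fset0 = f fset0.
Proof. by rewrite /Defs.KLt eqxx. Qed.

Lemma KLt_le (f g : {fset T} -> R) X :
  (forall Y, f Y <= g Y) -> KLt f X <= KLt g X.
Proof.
move=> fg; rewrite /Defs.KLt; case: ifP => _ //.
by apply: ler_sum => N _; rewrite ler_wpM2l ?mulr_ge0 ?normc_ge0.
Qed.

Lemma KLB (f g : {fset T} -> R[i]) X :
  KL f X - KL g X = KL (fun Y => f Y - g Y) X.
Proof.
rewrite /Defs.KL; case: ifP => _ //.
by rewrite -sumrB; apply: eq_bigr => N _; rewrite mulrBr.
Qed.

Lemma KLtB (f g : {fset T} -> R) X :
  KLt f X - KLt g X = KLt (fun Y => f Y - g Y) X.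
Proof.
rewrite /Defs.KLt; case: ifP => _ //.
by rewrite -sumrB; apply: eq_bigr => N _; rewrite mulrBr.
Qed.

Lemma normc_KL (f : {fset T} -> R[i]) X :
  normc (KL f X) <= KLt (fun Y => normc (f Y)) X.
Proof.
rewrite /Defs.KL /Defs.KLt; case: ifP => _ //.
by apply: le_trans (normc_sum _ _) _; apply: ler_sum => N _; rewrite !normcM.
Qed.

Lemma KL_cvg (f : nat -> {fset T} -> R[i]) (g : {fset T} -> R[i]) X :
  (forall Y, cvgC (fun n => f n Y) (g Y)) ->
  cvgC (fun n => KL (f n) X) (KL g X).
Proof.
move=> cvf; rewrite /Defs.KL; case: ifP => _; first exact: cvf.
by apply: cvgC_sum => N; apply: cvgCMl.
Qed.

Fixpoint rhotn (n : nat) : {fset T} -> R :=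
  if n is n'.+1 then KLt (rhotn n') else fun X => (X == fset0)%:R.

Lemma rhon_fset0 n : rhon n fset0 = 1.
Proof. by elim: n => [|n IH]; rewrite /= ?KL_fset0 // /rho0 eqxx. Qed.

Lemma normc_rhon_le n X : normc (rhon n X) <= rhotn n X.
Proof.
elim: n X => [|n IH] X; last exact: le_trans (normc_KL _ _) (KLt_le _ IH).
by rewrite /= /rho0; case: eqP => _; rewrite ?normc1 ?normc0.
Qed.

Lemma normc_rhon_increment n X :
  normc (rhon n.+1 X - rhon n X) <= rhotn n.+1 X - rhotn n X.
Proof.
elim: n X => [|n IH] X.
  have [->|X_neq0] := eqVneq X fset0.
    by rewrite !rhon_fset0 [rhotn 1 _]/= KLt_fset0 !subrr normc0.
  rewrite /= /rho0 (negbTE X_neq0) !subr0.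
  exact: le_trans (normc_KL _ _) (KLt_le _ (normc_rhon_le 0)).
rewrite [rhon n.+2 X]/= [rhotn n.+2 X]/= KLB KLtB.
exact: le_trans (normc_KL _ _) (KLt_le _ IH).
Qed.

Lemma rhotn_le_supersolution (xi : {fset T} -> R) n X :
  (forall Y, 0 <= xi Y) -> (forall Y, KLt xi Y <= xi Y) -> xi fset0 = 1 ->
  rhotn n X <= xi X.
Proof.
move=> xi_ge0 xi_sup xi0; elim: n X => [|n IH] X.
  by rewrite /=; case: eqP => [->|_]; rewrite ?xi0.
exact: le_trans (KLt_le _ IH) (xi_sup X).
Qed.

End KernelIteration.

Theorem proposition6p3 (R : realType) (T : countType)
    (z : T -> R[i]) (W : {fset T} -> R[i])
    (L : {fset T}) (s : {fset T} -> T) (hs : is_selector s)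
    (xi : {fset T} -> R)
    (xi_ge0 : forall X, 0 <= xi X)
    (xi_sup : forall X, KLt z W s L xi X <= xi X)
    (xi0 : xi fset0 = 1) :
  exists rho : {fset T} -> R[i],
    (forall X, cvgC (fun n => rhon z W s L n X) (rho X)) /\
    (forall X, rho X = KL z W s L rho X) /\
    rho fset0 = 1 /\
    (forall X, ComplexField.Normc.normc (rho X) <= xi X).
Proof.
have rhotn_le_xi n X : rhotn z W s L n X <= xi X.
  exact: rhotn_le_supersolution.
have rhon_cvg X : exists l, cvgC (fun n => rhon z W s L n X) l.
  exact: cvgC_dominated_increments
    (normc_rhon_increment z W s L ^~ X) (rhotn_le_xi ^~ X).
have [rho rho_cvg] := choice rhon_cvg.
exists rho; split; first exact: rho_cvg.
split; [|split].
- by move=> X; apply: cvgC_unique (cvgC_shift (rho_cvg X)) _; apply: KL_cvg.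
- apply: cvgC_unique (rho_cvg fset0) _.
  by apply: eq_cvgC (cvgC_cst 1) => n; rewrite rhon_fset0.
- move=> X; apply: cvgC_normc_le (rho_cvg X) _ => n.
  exact: le_trans (normc_rhon_le z W s L n X) (rhotn_le_xi n X).
Qed.
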